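(* Let $\{x_k\}$ be generated by the Subgradient-InexP method with the exogenous stepsize rule, under the standing assumptions. Then $\liminf_k f(x_k)=f^*$ (where $f^*=\inf_{x\in C}f(x)$, possibly $-\infty$). In addition, if $\Omega^*\neq\varnothing$, then $\{x_k\}$ converges to a point $x_*\in\Omega^*$.
   Context: Problem: minimize a convex $f:\mathbb{R}^n\to\mathbb{R}$ over a nonempty closed convex $C\subset\mathbb{R}^n$; $f^*:=\inf_{x\in C}f(x)$ and $\Omega^*$ is the (possibly empty) set of minimizers of $f$ on $C$. For $\epsilon\ge0$, $\partial_\epsilon f(x):=\{s: f(y)\ge f(x)+\langle s,y-x\rangle-\epsilon\ \forall y\}$. Relative error tolerance function: any $\varphi_{\gamma,\theta,\lambda}:(\mathbb{R}^n)^3\to[0,\infty)$ with $\varphi_{\gamma,\theta,\lambda}(u,v,w)\le\gamma\|v-u\|^2+\theta\|w-v\|^2+\lambda\|w-u\|^2$; for $u\in C$, $\mathcal{P}_C(\varphi_{\gamma,\theta,\lambda},u,v):=\{w\in C:\langle v-w,z-w\rangle\le\varphi_{\gamma,\theta,\lambda}(u,v,w)\ \forall z\in C\}$. Subgradient-InexP method: $x_0\in C$; at iteration $k$, if $0\in\partial f(x_k)$ stop; otherwise choose nonzero $s_k\in\partial_{\epsilon_k}f(x_k)$, stepsize $t_k>0$, and $x_{k+1}\in\mathcal{P}_C(\varphi_{\gamma_k,\theta_k,\lambda_k},x_k,x_k-t_ks_k)$. Standing assumptions: $\gamma_k\in[0,\bar\gamma)$, $\theta_k\in[0,\bar\theta)$,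 $\lambda_k\in[0,\bar\lambda)$ with $\bar\gamma\ge0$, $\bar\theta,\bar\lambda\in[0,1/2)$; the sequence is infinite. Exogenous stepsize rule: $\mu\ge0$; $\{\alpha_k\}$, $\{\epsilon_k\}$ nonnegative, $\{\epsilon_k\}$ nonincreasing, $\sum_k\alpha_k=+\infty$, $\sum_k\alpha_k^2<+\infty$, $\epsilon_k\le\mu\alpha_k$; $t_k:=\alpha_k/\eta_k$, $\eta_k:=\max\{1,\|s_k\|\}$. *)

From mathcomp Require Import all_boot all_order all_algebra.
From mathcomp Require Import all_classical all_reals all_analysis.
Set Implicit Arguments. Unset Strict Implicit. Unset Printing Implicit Defensive.
Import Order.TTheory GRing.Theory Num.Theory.
Import numFieldNormedType.Exports.
Local Open Scope classical_set_scope.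
Local Open Scope ring_scope.

Section Defs.
Context {R : realType} {n : nat}.
Notation vec := 'rV[R]_n.

Definition dotp (u v : vec) : R := \sum_(i < n) u ord0 i * v ord0 i.
Definition enorm (u : vec) : R := Num.sqrt (dotp u u).

Definition convex_fun (f : vec -> R) : Prop :=
  forall (x y : vec) (t : R), 0 <= t -> t <= 1 ->
    f (t *: x + (1 - t) *: y) <= t * f x + (1 - t) * f y.

Definition cvx_set (C : set vec) : Prop :=
  forall (x y : vec) (t : R), C x -> C y -> 0 <= t -> t <= 1 ->
    C (t *: x + (1 - t) *: y).

Definition eps_subdiff (f : vec -> R) (eps : R) (x : vec) : set vec :=
  [set s | forall y : vec, f y >= f x + dotp s (y - x) - eps].

Definition rel_err_tol (gam th lam : R) (phi : vec -> vec -> vec -> R) : Prop :=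
  forall u v w : vec, 0 <= phi u v w /\
    phi u v w <= gam * dotp (v - u) (v - u) + th * dotp (w - v) (w - v)
                 + lam * dotp (w - u) (w - u).

Definition inexact_proj (C : set vec) (phi : vec -> vec -> vec -> R) (u v : vec)
  : set vec :=
  [set w | C w /\ forall z : vec, C z -> dotp (v - w) (z - w) <= phi u v w].

Definition opt_val (f : vec -> R) (C : set vec) : \bar R :=
  ereal_inf [set (f x)%:E | x in C].

Definition minimizers (f : vec -> R) (C : set vec) : set vec :=
  [set x | C x /\ forall y, C y -> f x <= f y].

End Defs.

From mathcomp Require Import all_boot all_order all_algebra.
From mathcomp Require Import all_classical all_reals all_analysis.
From mathcomp Require Import ring lra.
Import Order.TTheory GRing.Theory Num.Theory.
Import numFieldNormedType.Exports.
Local Open Scope classical_set_scope.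
Local Open Scope ring_scope.

(* The proof follows the classical quasi-Fejer argument.
   - Inexact projections are quasi-nonexpansive up to an error: if
     w is in P_C(phi, u, v) then |w - z|^2 <= |v - z|^2 + 2M |v - u|^2 for
     every z in C, with M depending only on the tolerance bounds.
   - A convex function on R^n is bounded above on boxes (by its values at
     the vertices); hence epsilon-subgradients are bounded on bounded sets
     and the function is lower semicontinuous.
   - For the iteration this yields the basic inequality
     |x_{k+1} - z|^2 <= |x_k - z|^2 + 2 t_k (f z - f x_k) + E alpha_k^2.
     If f(x_k) stayed above f z + del, summing it would bound the iterates
     and the sums of t_k; bounded iterates have bounded subgradients, so
     alpha_k <= H t_k, contradicting the divergence of the sums of alpha_k. *)

Section InnerProduct.
Context {R : realType} {n : nat}.
Notation vec := 'rV[R]_n.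

Lemma dotpC (u v : vec) : dotp u v = dotp v u.
Proof. by apply: eq_bigr => i _; rewrite mulrC. Qed.

Lemma dotpDl (u w v : vec) : dotp (u + w) v = dotp u v + dotp w v.
Proof. by rewrite /dotp -big_split /=; apply: eq_bigr => i _; rewrite !mxE mulrDl. Qed.

Lemma dotpZl (c : R) (u v : vec) : dotp (c *: u) v = c * dotp u v.
Proof. by rewrite /dotp mulr_sumr; apply: eq_bigr => i _; rewrite !mxE mulrA. Qed.

Lemma dotpNl (u v : vec) : dotp (- u) v = - dotp u v.
Proof. by rewrite -scaleN1r dotpZl mulN1r. Qed.

Lemma dotpBl (u w v : vec) : dotp (u - w) v = dotp u v - dotp w v.
Proof. by rewrite dotpDl dotpNl. Qed.

Lemma dotpDr (v u w : vec) : dotp v (u + w) = dotp v u + dotp v w.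
Proof. by rewrite dotpC dotpDl !(dotpC v). Qed.

Lemma dotpBr (v u w : vec) : dotp v (u - w) = dotp v u - dotp v w.
Proof. by rewrite dotpC dotpBl !(dotpC v). Qed.

Lemma dotpZr (c : R) (u v : vec) : dotp u (c *: v) = c * dotp u v.
Proof. by rewrite dotpC dotpZl dotpC. Qed.

Lemma dotpNr (u v : vec) : dotp u (- v) = - dotp u v.
Proof. by rewrite dotpC dotpNl dotpC. Qed.

Lemma dotp0r (u : vec) : dotp u 0 = 0.
Proof. by rewrite /dotp big1 // => i _; rewrite mxE mulr0. Qed.

Lemma dotp_ge0 (u : vec) : 0 <= dotp u u.
Proof. by apply: sumr_ge0 => i _; rewrite -expr2 sqr_ge0. Qed.

Lemma enorm_sqr (u : vec) : enorm u ^+ 2 = dotp u u.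
Proof. by rewrite sqr_sqrtr // dotp_ge0. Qed.

Lemma sqr_coord_le (u : vec) (i : 'I_n) : u ord0 i ^+ 2 <= dotp u u.
Proof.
rewrite /dotp (bigD1 i) //= -expr2 lerDl; apply: sumr_ge0 => j _.
by rewrite -expr2 sqr_ge0.
Qed.

(* The crude form |u_i| <= D + 1 avoids square roots in later bounds. *)
Lemma coord_le {u : vec} {D : R} : dotp u u <= D -> forall i, `|u ord0 i| <= D + 1.
Proof.
move=> hu i; have := sqr_coord_le u i; rewrite -real_normK ?num_real //.
have := normr_ge0 (u ord0 i); nra.
Qed.

Lemma dotp_le_coord (u : vec) (e : R) : (forall i, `|u ord0 i| <= e) ->
  dotp u u <= n%:R * e ^+ 2.
Proof.
move=> h; have -> : n%:R * e ^+ 2 = \sum_(i < n) e ^+ 2.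
  by rewrite sumr_const card_ord mulr_natl.
by apply: ler_sum => i _; have := h i; rewrite ler_norml => /andP[a b]; nra.
Qed.

End InnerProduct.

(* Expands inner products of linear combinations, to be followed by [ring]
   after orienting the remaining [dotp] terms with [dotpC]. *)
Ltac dotp_expand := rewrite ?(dotpDl, dotpDr, dotpBl, dotpBr, dotpNl, dotpNr, dotpZl, dotpZr).

(* The constants of the one-step estimate for inexact projections with
   tolerance bounds [gb], [thb], [lb]: [proj_K] controls the projection
   displacement and [proj_M] the error of the quasi-nonexpansiveness. *)
Definition proj_K {R : realType} (gb thb lb : R) : R :=
  (1 - thb - lb)^-1 ^+ 2 + 2 * (gb + lb) / (1 - thb - lb).

Definition proj_M {R : realType} (gb thb lb : R) : R :=
  gb + lb * (2 * proj_K gb thb lb + 2) + thb * proj_K gb thb lb.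

Section InexactProjection.
Context {R : realType} {n : nat} {gb thb lb : R}.
Notation vec := 'rV[R]_n.
Notation N u := (dotp u u).

Hypotheses (gb0 : 0 <= gb) (thb0 : 0 <= thb) (thb_lt : thb < 1/2)
  (lb0 : 0 <= lb) (lb_lt : lb < 1/2).

(* Copies the bounds on the tolerance parameters into ordinary local
   hypotheses: [lra] and [nra] do not pick up section hypotheses. *)
Ltac tol_bounds :=
  pose proof gb0; pose proof thb0; pose proof thb_lt; pose proof lb0; pose proof lb_lt.

Lemma proj_K_ge0 : 0 <= proj_K gb thb lb.
Proof.
tol_bounds; apply: addr_ge0; first exact: sqr_ge0.
by apply: divr_ge0; lra.
Qed.

Lemma proj_M_ge0 : 0 <= proj_M gb thb lb.
Proof.
tol_bounds; rewrite /proj_M; move: proj_K_ge0; set K := proj_K gb thb lb => K0.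
by have := mulr_ge0 lb0 K0; have := mulr_ge0 thb0 K0; nra.
Qed.

(* The scalar heart of the displacement bound, with A = |w - v|^2,
   B = |u - v|^2, P = <w - v, u - v>: the Cauchy-Schwarz type inequality
   2cP <= c^2 A + B (c = 1 - thb - lb) together with the inexactness
   condition tested at z = u gives A <= K B. *)
Lemma proj_scalar_bound (A B P th la g : R) :
  0 <= A -> 0 <= B -> 0 <= th -> th <= thb -> 0 <= la -> la <= lb ->
  0 <= g -> g <= gb ->
  0 <= (1 - thb - lb) ^+ 2 * A - 2 * (1 - thb - lb) * P + B ->
  A - P <= g * B + th * A + la * (A - 2 * P + B) ->
  A <= proj_K gb thb lb * B.
Proof.
move=> A0 B0 th0 th_le la0 la_le g0 g_le cs h; rewrite /proj_K; tol_bounds.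
set c := 1 - thb - lb.
have c0 : 0 < c by rewrite /c; lra.
have {}cs : 0 <= c ^+ 2 * A - 2 * c * P + B := cs.
have PcA : 2 * P <= c * A + B / c.
  rewrite -(@ler_pM2l _ c) //.
  have -> : c * (c * A + B / c) = c ^+ 2 * A + B by field; rewrite gt_eqF.
  lra.
have P_bound : (1 - 2 * la) * P <= (c * A + B / c) / 2.
  have := mulr_ge0 (ltW c0) A0; have := divr_ge0 B0 (ltW c0).
  case: (lerP 0 P) => hP.
    have : (1 - 2 * la) * P <= P by rewrite ler_piMl //; lra.
    lra.
  have : 0 <= 1 - 2 * la by lra.
  nra.
have cA : c * A <= (1 - th - la) * A by rewrite ler_wpM2r // /c; lra.
have gB : g * B + la * B <= (gb + lb) * B by rewrite -mulrDl ler_wpM2r //; lra.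
rewrite -(@ler_pM2l _ c) //.
have -> : c * ((c^-1 ^+ 2 + 2 * (gb + lb) / c) * B) = B / c + 2 * (gb + lb) * B.
  by field; rewrite gt_eqF.
lra.
Qed.

Context {C : set vec} {phi : vec -> vec -> vec -> R} {g th la : R} {u v w : vec}.
Hypotheses (tol : rel_err_tol g th la phi) (proj : inexact_proj C phi u v w)
  (Cu : C u) (g0 : 0 <= g) (g_le : g <= gb) (th0 : 0 <= th) (th_le : th <= thb)
  (la0 : 0 <= la) (la_le : la <= lb).

Lemma inexact_proj_displacement : N (w - v) <= proj_K gb thb lb * N (v - u).
Proof.
have [_ proj_u] := proj; have [_ tol_u] := tol u v w.
set c := 1 - thb - lb.
have -> : N (v - u) = N (u - v) by dotp_expand; rewrite (dotpC v u); ring.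
apply: (@proj_scalar_bound _ _ (dotp (w - v) (u - v)) _ _ _ _ _ th0 th_le la0 la_le g0 g_le);
  try exact: dotp_ge0.
  have := dotp_ge0 (c *: (w - v) - (u - v)).
  by dotp_expand; rewrite /c (dotpC v u) (dotpC w u) (dotpC v w); lra.
have := le_trans (proj_u u Cu) tol_u.
by dotp_expand; rewrite (dotpC v u) (dotpC w u) (dotpC v w); lra.
Qed.

Lemma inexact_proj_step (z : vec) : C z ->
  N (w - z) <= N (v - z) + 2 * proj_M gb thb lb * N (v - u).
Proof.
move=> Cz; have [_ proj_z] := proj; have [_ tol_w] := tol u v w.
have disp := inexact_proj_displacement; have K0 := proj_K_ge0; tol_bounds.
rewrite /proj_M; set K := proj_K gb thb lb in disp K0 *.
set A := N (w - v) in disp tol_w *; set B := N (v - u) in disp tol_w *.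
have A0 : 0 <= A := dotp_ge0 _.
have B0 : 0 <= B := dotp_ge0 _.
have wu : N (w - u) <= 2 * A + 2 * B.
  have := dotp_ge0 ((w - v) - (v - u)); rewrite /A /B.
  by dotp_expand; rewrite (dotpC v u) (dotpC w u) (dotpC v w); lra.
have expand_wz : N (w - z) = N (v - z) - A + 2 * dotp (v - w) (z - w).
  by rewrite /A; dotp_expand; rewrite (dotpC v w) (dotpC z w) (dotpC z v); ring.
have gB : g * B <= gb * B by rewrite ler_wpM2r.
have thA : th * A <= thb * (K * B) by apply: ler_pM.
have laWU : la * N (w - u) <= lb * ((2 * K + 2) * B).
  by apply: ler_pM => //; [exact: dotp_ge0 | lra].
have := proj_z z Cz; rewrite expand_wz; lra.
Qed.

End InexactProjection.

(* A convex function is bounded above on every box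
   { y | forall i, |y_i - c_i| <= r }: by convexity along one coordinate at a
   time, f y is dominated by f at one of the 2^n vertices of the box. *)
Section ConvexBoxBound.
Context {R : realType} {n : nat}.
Notation vec := 'rV[R]_n.
Variables (f : vec -> R) (c : vec) (r : R).
Hypotheses (f_convex : convex_fun f) (r_gt0 : 0 < r).

Definition vertex_fill (sg : {ffun 'I_n -> bool}) (m : nat) (y : vec) : vec :=
  \row_i (if (i < m)%N then c ord0 i + (if sg i then r else - r) else y ord0 i).

Definition set_coord (y : vec) (j : 'I_n) (a : R) : vec :=
  \row_i (if i == j then a else y ord0 i).

Lemma vertex_fill_set_coord (b : bool) (sg : {ffun 'I_n -> bool}) (m : nat)
    (j : 'I_n) (y : vec) : nat_of_ord j = m ->
  vertex_fill [ffun i => if i == j then b else sg i] m.+1 y =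
  vertex_fill sg m (set_coord y j (c ord0 j + (if b then r else - r))).
Proof.
move=> jm; apply/rowP => i; rewrite !mxE ffunE.
case: (eqVneq i j) => [->|ne]; first by rewrite jm ltnSn ltnn; case: b.
rewrite ltnS leq_eqVlt; suff /negPf -> : nat_of_ord i != m by [].
by apply: contra ne; rewrite -jm => /eqP /val_inj ->.
Qed.

(* Induction on the number of coordinates already moved to a vertex: a
   point whose first m coordinates lie in the box is dominated by some
   vertex filling; the m-th coordinate is a convex combination of its two
   extreme values, and f is larger at one of them. *)
Lemma convex_le_vertex_fill (m : nat) (y : vec) :
  (forall i : 'I_n, (i < m)%N -> `|y ord0 i - c ord0 i| <= r) ->
  exists sg, f y <= f (vertex_fill sg m y).
Proof.
have r0 := r_gt0 (* made visible to [lra] *); elim: m y => [|m IH] y y_box.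
  exists [ffun => true]; suff -> : vertex_fill [ffun => true] 0 y = y by [].
  by apply/rowP => i; rewrite mxE.
case: (ltnP m n) => [m_lt|n_le]; last first.
  have [sg le_sg] := IH y (fun i hi => y_box i (ltnW hi)).
  exists sg; suff <- : vertex_fill sg m y = vertex_fill sg m.+1 y by [].
  apply/rowP => i; rewrite !mxE.
  have im : (i < m)%N by apply: leq_trans (ltn_ord i) n_le.
  by rewrite im ltnS ltnW.
set j : 'I_n := Ordinal m_lt.
have /andP[yj_ge yj_le] : - r <= y ord0 j - c ord0 j <= r.
  by rewrite -ler_norml; exact: y_box.
set y_plus := set_coord y j (c ord0 j + r).
set y_minus := set_coord y j (c ord0 j - r).
set l := (y ord0 j - c ord0 j + r) / (2 * r).
have l0 : 0 <= l by apply: divr_ge0; lra.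
have l1 : l <= 1 by rewrite ler_pdivrMr; lra.
have y_comb : y = l *: y_plus + (1 - l) *: y_minus.
  apply/rowP => i; rewrite !mxE; case: eqP => [->|_]; last by ring.
  by rewrite /l; field; lra.
have f_comb := f_convex y_plus y_minus l l0 l1; rewrite -y_comb in f_comb.
have set_box : forall (a : R) (i : 'I_n), (i < m)%N ->
    `|set_coord y j a ord0 i - c ord0 i| <= r.
  move=> a i im; rewrite mxE; suff /negPf -> : i != j by exact: y_box (ltnW im).
  by apply/eqP => ij; move: im; rewrite ij ltnn.
have [sp le_sp] := IH y_plus (set_box _).
have [sm le_sm] := IH y_minus (set_box _).
case: (lerP (f y_minus) (f y_plus)) => cmp.
  exists [ffun i => if i == j then true else sp i].
  by rewrite vertex_fill_set_coord //; apply: le_trans f_comb _; nra.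
exists [ffun i => if i == j then false else sm i].
by rewrite vertex_fill_set_coord //; apply: le_trans f_comb _; nra.
Qed.

Lemma convex_box_bound : exists B, forall y : vec,
  (forall i, `|y ord0 i - c ord0 i| <= r) -> f y <= B.
Proof.
exists (\sum_(sg : {ffun 'I_n -> bool}) `|f (vertex_fill sg n c)|) => y y_box.
have [sg le_sg] := convex_le_vertex_fill n y (fun i _ => y_box i).
have fill_c : vertex_fill sg n y = vertex_fill sg n c.
  by apply/rowP => i; rewrite !mxE ltn_ord.
rewrite fill_c in le_sg.
apply: (le_trans le_sg); apply: (le_trans (ler_norm _)).
by rewrite (bigD1 sg) //= lerDl; apply: sumr_ge0 => *; exact: normr_ge0.
Qed.

End ConvexBoxBound.

Section ConvexConsequences.
Context {R : realType} {n : nat} {f : 'rV[R]_n -> R}.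
Notation vec := 'rV[R]_n.

(* Epsilon-subgradients are bounded where f is bounded above nearby:
   testing the subgradient inequality at x + s/|s| gives
   |s| <= B - f x + eps. *)
Lemma eps_subgrad_norm_le {z x s : vec} {r B eps : R} :
  (forall y : vec, (forall i, `|y ord0 i - z ord0 i| <= r + 1) -> f y <= B) ->
  (forall i, `|x ord0 i - z ord0 i| <= r) ->
  eps_subdiff f eps x s -> enorm s <= B - f x + eps.
Proof.
move=> f_le x_box s_sub.
have eps0 : 0 <= eps by have := s_sub x; rewrite subrr dotp0r; lra.
have fx_le : f x <= B by apply: f_le => i; have := x_box i; lra.
set q := enorm s; have q0 : 0 <= q := sqrtr_ge0 _.
have [->|q_gt0] := eqVneq q 0; first by lra.
have {}q_gt0 : 0 < q by rewrite lt_def q_gt0.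
have Nq : dotp s s = q ^+ 2 by rewrite enorm_sqr.
set y := x + q^-1 *: s.
have y_box : forall i, `|y ord0 i - z ord0 i| <= r + 1.
  move=> i; rewrite /y !mxE.
  have si : `|q^-1 * s ord0 i| <= 1.
    rewrite normrM ger0_norm ?invr_ge0 // ler_pdivrMl // mulr1.
    have := sqr_coord_le s i; rewrite Nq -real_normK ?num_real //.
    by have := normr_ge0 (s ord0 i); nra.
  have := ler_normD (x ord0 i - z ord0 i) (q^-1 * s ord0 i).
  have -> : x ord0 i - z ord0 i + q^-1 * s ord0 i =
    x ord0 i + q^-1 * s ord0 i - z ord0 i by ring.
  by have := x_box i; lra.
have step : dotp s (y - x) = q.
  rewrite /y addrC addKr dotpZr Nq; field; exact: lt0r_neq0.
have := s_sub y; rewrite step; have := f_le y y_box; lra.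
Qed.

(* Convex functions are lower semicontinuous: if f takes values at most
   L + e at points arbitrarily close to p, then f p <= L.  Writing
   p = tau y' + (1 - tau) y with y' in the unit box around p, where f is
   bounded by B, gives f p <= tau B + (1 - tau) f y. *)
Lemma convex_le_of_near (p : vec) (L : R) : convex_fun f ->
  (forall tau e : R, 0 < tau -> 0 < e ->
     exists y : vec, (forall i, `|p ord0 i - y ord0 i| < tau) /\ f y <= L + e) ->
  f p <= L.
Proof.
move=> f_convex near_p.
have [B f_le] := convex_box_bound f p 1 f_convex (@ltr01 R).
have near_bound tau e : 0 < tau -> tau < 1 -> 0 < e ->
    f p <= tau * B + (1 - tau) * (L + e).
  move=> tau0 tau1 e0; have [y [y_near fy]] := near_p tau e tau0 e0.
  set y' := p + ((1 - tau) / tau) *: (p - y).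
  have y'_box : forall i, `|y' ord0 i - p ord0 i| <= 1.
    move=> i; rewrite /y' !mxE addrC addKr normrM ger0_norm; last first.
      by apply: divr_ge0; lra.
    rewrite mulrAC ler_pdivrMr // mul1r.
    by have := y_near i; have := normr_ge0 (p ord0 i - y ord0 i); nra.
  have p_comb : p = tau *: y' + (1 - tau) *: y.
    by apply/rowP => i; rewrite /y' !mxE; field; lra.
  have := f_convex y' y tau (ltW tau0) (ltW tau1); rewrite -p_comb.
  have := f_le y' y'_box; have : 0 <= 1 - tau by lra.
  by nra.
apply/ler_addgt0Pr => e e0.
set a := `|B - L| + 1; have a0 : 0 < a by rewrite /a; have := normr_ge0 (B - L); lra.
set tau := e / (2 * (e + a)).
have tau0 : 0 < tau by apply: divr_gt0 => //; lra.
have tau1 : tau < 1 by rewrite /tau ltr_pdivrMr; lra.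
have tau_a : tau * a <= e / 2.
  by rewrite /tau mulrAC ler_pdivrMr; [nra | lra].
have e2 : 0 < e / 2 by lra.
have := near_bound tau (e / 2) tau0 tau1 e2.
have : tau * (B - L) <= tau * a.
  by apply: ler_wpM2l; [lra | have := ler_norm (B - L); rewrite /a; lra].
have : (1 - tau) * (e / 2) <= e / 2 by have := ltW tau0; nra.
lra.
Qed.

End ConvexConsequences.

Section SeriesBlocks.
Context {R : realType} {a : nat -> R}.

Lemma divergent_series_blocks : series a @ \oo --> +oo ->
  forall (A : R) (N0 : nat), exists m, (N0 <= m)%N /\ A <= \sum_(N0 <= k < m) a k.
Proof.
move=> /cvgryPge a_div A N0.
have [M _ le_M] := a_div (A + series a N0).
exists (maxn M N0); split; first exact: leq_maxr.
have := le_M (maxn M N0) (leq_maxl _ _).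
rewrite /series /= (big_cat_nat (leq0n N0) (leq_maxr M N0)) /=; lra.
Qed.

Hypotheses (a_ge0 : forall k, 0 <= a k) (a_cvg : cvg (series a @ \oo)).

Lemma series_le_lim (m : nat) : series a m <= limn (series a).
Proof.
apply: nondecreasing_cvgn_le => //.
by apply: nondecreasing_series => k _ _; exact: a_ge0.
Qed.

Lemma series_block_le (m1 m2 : nat) : \sum_(m1 <= k < m2) a k <= limn (series a).
Proof.
have [le_m|lt_m] := leqP m1 m2; last first.
  by rewrite big_geq ?(ltnW lt_m) //; have := series_le_lim 0; rewrite /series /= big_geq.
have := series_le_lim m2; rewrite /series /= (big_cat_nat (leq0n m1) le_m) /=.
have : 0 <= \sum_(0 <= k < m1) a k by apply: sumr_ge0 => k _; exact: a_ge0.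
lra.
Qed.

Lemma series_blocks_small (e : R) : 0 < e ->
  exists K, forall m1 m2, (K <= m1)%N -> \sum_(m1 <= k < m2) a k <= e.
Proof.
move=> e0; have [K _ near_lim] := cvg_ball a_cvg e0.
exists K => m1 m2 K_le.
have [le_m|lt_m] := leqP m1 m2; last by rewrite big_geq ?(ltnW lt_m) // ltW.
have : `|limn (series a) - series a m1| < e.
  by have := near_lim m1 K_le; rewrite -ball_normE.
have := series_le_lim m2; have := ler_norm (limn (series a) - series a m1).
by rewrite /series /= (big_cat_nat (leq0n m1) le_m) /=; lra.
Qed.

End SeriesBlocks.

Section NormalizedStep.
Context {R : realType}.

Lemma normalized_step_le (a q : R) : 0 <= a -> 0 <= q ->
  a / Num.max 1 q <= a /\ (a / Num.max 1 q) ^+ 2 * q ^+ 2 <= a ^+ 2.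
Proof.
move=> a0 q0; set m := Num.max 1 q.
have m1 : 1 <= m by rewrite /m le_max lexx.
have qm : q <= m by rewrite /m le_max lexx orbT.
have m0 : 0 < m by lra.
split; first by rewrite ler_pdivrMr //; nra.
have -> : (a / m) ^+ 2 * q ^+ 2 = a ^+ 2 * (q / m) ^+ 2 by field; rewrite gt_eqF.
have : (q / m) ^+ 2 <= 1.
  by rewrite expr_le1 ?divr_ge0 ?(ltW m0) // ler_pdivrMr // mul1r.
by have := sqr_ge0 a; nra.
Qed.

Lemma normalized_step_ge (a q G : R) : 0 <= a -> q <= G ->
  a <= Num.max 1 G * (a / Num.max 1 q).
Proof.
move=> a0 qG; have m0 : 0 < Num.max 1 q by rewrite lt_max ltr01.
rewrite mulrCA -{1}[a]mulr1; apply: ler_wpM2l => //.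
rewrite ler_pdivlMr // mul1r ge_max le_max lexx /= le_max.
by rewrite qG orbT.
Qed.

End NormalizedStep.

Section QuasiFejer.
Context {R : realType} {n : nat}.
Notation vec := 'rV[R]_n.
Notation N u := (dotp u u).

Lemma bounded_seq_cluster {y : nat -> vec} {C : set vec} {c : vec} {r : R} :
  closed C -> (forall j, C (y j)) -> (forall j i, `|y j ord0 i - c ord0 i| <= r) ->
  exists2 p, C p & forall (tau : R) (J : nat), 0 < tau ->
    exists j, (J <= j)%N /\ forall i, `|p ord0 i - y j ord0 i| < tau.
Proof.
move=> C_closed Cy y_box; set F := y @ \oo.
have F_box : F [set v : vec | forall i,
    `[c ord0 i - r, c ord0 i + r]%classic (v ord0 i)].
  exists 0%N => // j _ i /=; rewrite in_itv /=.
  by have := y_box j i; rewrite ler_norml => /andP[? ?]; apply/andP; split; lra.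
have [p [_ p_clust]] := @rV_compact _ _ _ (fun i => @segment_compact R _ _) F _ F_box.
have meets (A B : set vec) : F A -> nbhs p B -> A `&` B !=set0 by exact: p_clust.
exists p.
  apply: C_closed => B pB.
  have [v [Cv Bv]] := meets C B (ex_intro2 _ _ 0%N I (fun j _ => Cy j)) pB.
  by exists v.
move=> tau J tau0.
have F_tail : F [set v | exists2 j, (J <= j)%N & v = y j] by exists J => // j /= ?; exists j.
have [_ [[j Jj ->] /= [_ near_p]]] := meets _ _ F_tail (nbhsx_ballx p tau tau0).
exists j; split => // i; have := near_p ord0 i.
by rewrite -ball_normE.
Qed.

Lemma ball_of_dotp (u v : vec) (e : R) : 0 < e -> N (u - v) < e ^+ 2 -> ball v e u.
Proof.
move=> e0 uv; split => // i0 i; rewrite (ord1 i0) -ball_normE /ball_ /= distrC.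
have := sqr_coord_le (u - v) i; rewrite !mxE -real_normK ?num_real //.
by have := normr_ge0 (u ord0 i - v ord0 i); nra.
Qed.

Lemma quasi_fejer_cvg {y : nat -> vec} {p : vec} {b : nat -> R} {M : R} :
  0 <= M -> (forall k, 0 <= b k) -> cvg (series b @ \oo) ->
  (forall k i, N (y (k + i)%N - p) <= N (y k - p) + M * \sum_(k <= j < k + i) b j) ->
  (forall (tau : R) (K : nat), 0 < tau ->
     exists k, (K <= k)%N /\ forall i, `|p ord0 i - y k ord0 i| < tau) ->
  y @ \oo --> p.
Proof.
move=> M0 b0 b_cvg fejer near_p; apply/cvg_ballP => e e0.
set eta := e ^+ 2 / 4; have eta0 : 0 < eta by apply: divr_gt0 => //; exact: exprn_gt0.
have [K small_tail] := series_blocks_small b0 b_cvg _ (divr_gt0 eta0 (ltr_pwDr ltr01 M0)).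
have n0 : (0 : R) <= n%:R := ler0n _ _.
set tau := e / (2 * (n%:R + 1)); have tau0 : 0 < tau by apply: divr_gt0 => //; lra.
have [k [Kk yk_near]] := near_p tau K tau0.
have yk_close : N (y k - p) <= eta.
  apply: le_trans (dotp_le_coord (y k - p) tau _) _.
    by move=> i; rewrite !mxE distrC; exact: ltW.
  have -> : n%:R * tau ^+ 2 = eta * (n%:R / (n%:R + 1) ^+ 2) by rewrite /tau /eta; field; lra.
  rewrite -[leRHS]mulr1 ler_wpM2l ?(ltW eta0) // ler_pdivrMr; last by apply: exprn_gt0; lra.
  nra.
exists k => // m /= km; have [i ->] : exists i, m = (k + i)%N by exists (m - k)%N; rewrite subnKC.
apply: ball_of_dotp => //; apply: le_lt_trans (fejer k i) _.
have : M * \sum_(k <= j < k + i) b j <= M * (eta / (M + 1)) by rewrite ler_wpM2l ?small_tail.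
have : M * (eta / (M + 1)) <= eta by rewrite mulrA ler_pdivrMr; nra.
have : eta + eta < e ^+ 2 by rewrite /eta; have := exprn_gt0 2 e0; lra.
lra.
Qed.

End QuasiFejer.

Section SubgradientInexP.
Context {R : realType} {n : nat}.
Notation vec := 'rV[R]_n.
Notation N u := (dotp u u).
Context {f : vec -> R} {C : set vec} {x s : nat -> vec}
  {t eps alpha gam th lam : nat -> R}
  {phi : nat -> vec -> vec -> vec -> R} {gbar thbar lbar mu : R}.
Hypotheses (f_convex : convex_fun f)
  (gbar0 : 0 <= gbar) (thbar0 : 0 <= thbar) (thbar_lt : thbar < 1/2)
  (lbar0 : 0 <= lbar) (lbar_lt : lbar < 1/2)
  (gam_bnd : forall k, 0 <= gam k /\ gam k < gbar)
  (th_bnd : forall k, 0 <= th k /\ th k < thbar)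
  (lam_bnd : forall k, 0 <= lam k /\ lam k < lbar)
  (phi_tol : forall k, rel_err_tol (gam k) (th k) (lam k) (phi k))
  (mu0 : 0 <= mu) (alpha0 : forall k, 0 <= alpha k) (eps0 : forall k, 0 <= eps k)
  (eps_dec : forall k, eps k.+1 <= eps k)
  (alpha_div : series alpha @ \oo --> +oo)
  (alpha_sq_cvg : cvg (series (fun k => alpha k ^+ 2) @ \oo))
  (eps_le : forall k, eps k <= mu * alpha k)
  (t_def : forall k, t k = alpha k / Num.max 1 (enorm (s k)))
  (Cx0 : C (x 0%N))
  (s_sub : forall k, eps_subdiff f (eps k) (x k) (s k))
  (x_next : forall k, inexact_proj C (phi k) (x k) (x k - t k *: s k) (x k.+1)).

Local Notation alpha_sq k := (alpha k ^+ 2).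
Local Notation S2 := (limn (series (fun k => alpha k ^+ 2))).

Lemma iterate_in_C (k : nat) : C (x k).
Proof. by case: k => [|k] //; case: (x_next k). Qed.

Lemma stepsize_ge0 (k : nat) : 0 <= t k.
Proof. by rewrite t_def divr_ge0 // (le_trans ler01) // le_max lexx. Qed.

Lemma stepsize_le (k : nat) : t k <= alpha k /\ t k ^+ 2 * N (s k) <= alpha_sq k.
Proof. by rewrite t_def -enorm_sqr; exact: normalized_step_le (sqrtr_ge0 _). Qed.

Lemma eps_le_eps0 (k : nat) : eps k <= eps 0%N.
Proof. by elim: k => // k IH; exact: le_trans (eps_dec k) IH. Qed.

Lemma alpha_sq_block_le (m1 m2 : nat) : \sum_(m1 <= k < m2) alpha_sq k <= S2.
Proof. exact: series_block_le (fun k => sqr_ge0 (alpha k)) alpha_sq_cvg m1 m2. Qed.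

Definition err_const : R := 2 * proj_M gbar thbar lbar + 1 + 2 * mu.

Lemma err_const_ge0 : 0 <= err_const.
Proof.
have := proj_M_ge0 gbar0 thbar0 thbar_lt lbar0 lbar_lt; have := mu0.
by rewrite /err_const; lra.
Qed.

Lemma basic_inequality (z : vec) (k : nat) : C z ->
  N (x k.+1 - z) <= N (x k - z) + 2 * t k * (f z - f (x k)) + err_const * alpha_sq k.
Proof.
move=> Cz; have [g0 g_lt] := gam_bnd k; have [th0 th_lt] := th_bnd k.
have [la0 la_lt] := lam_bnd k.
have step := inexact_proj_step gbar0 thbar0 thbar_lt lbar0 lbar_lt (phi_tol k) (x_next k)
  (iterate_in_C k) g0 (ltW g_lt) th0 (ltW th_lt) la0 (ltW la_lt) z Cz.
have move_len : N (x k - t k *: s k - x k) = t k ^+ 2 * N (s k).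
  by dotp_expand; rewrite (dotpC (s k) (x k)); ring.
have move_z : N (x k - t k *: s k - z) =
    N (x k - z) - 2 * t k * dotp (s k) (x k - z) + t k ^+ 2 * N (s k).
  by dotp_expand; rewrite (dotpC (s k) (x k)) (dotpC z (x k)) (dotpC z (s k)); ring.
have subgrad : t k * (f (x k) - f z - eps k) <= t k * dotp (s k) (x k - z).
  apply: ler_wpM2l; first exact: stepsize_ge0.
  have := s_sub k z; have -> : dotp (s k) (z - x k) = - dotp (s k) (x k - z).
    by dotp_expand; ring.
  lra.
have [t_le t_sq] := stepsize_le k.
have t_eps : t k * eps k <= mu * alpha_sq k.
  have : t k * eps k <= alpha k * (mu * alpha k) by apply: ler_pM => //; exact: stepsize_ge0.
  by rewrite expr2; lra.
have M_step : proj_M gbar thbar lbar * (t k ^+ 2 * N (s k)) <=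
    proj_M gbar thbar lbar * alpha_sq k.
  by apply: ler_wpM2l => //; exact: proj_M_ge0.
by rewrite move_len move_z /err_const in step *; lra.
Qed.

Lemma basic_inequality_sum (z : vec) (N0 : nat) (del : R) : C z -> 0 <= del ->
  (forall k, (N0 <= k)%N -> f z + del <= f (x k)) ->
  forall i, N (x (N0 + i)%N - z) + 2 * del * \sum_(N0 <= k < N0 + i) t k
     <= N (x N0 - z) + err_const * \sum_(N0 <= k < N0 + i) alpha_sq k.
Proof.
move=> Cz del0 z_below; elim=> [|i IH]; first by rewrite addn0 !big_geq // !mulr0 !addr0.
rewrite addnS !big_nat_recr ?leq_addr //=.
have below_i := z_below (N0 + i)%N (leq_addr _ _).
have := @basic_inequality z (N0 + i)%N Cz.
have : t (N0 + i)%N * (f z - f (x (N0 + i)%N)) <= - (t (N0 + i)%N * del).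
  by rewrite -mulrN ler_wpM2l ?stepsize_ge0 //; lra.
lra.
Qed.

(* Where the iterates stay in a bounded region and their values are
   bounded below, the subgradients are bounded and hence t_k is
   comparable to alpha_k. *)
Lemma stepsize_comparable (z : vec) (D L : R) (N0 : nat) :
  (forall k, (N0 <= k)%N -> N (x k - z) <= D) ->
  (forall k, (N0 <= k)%N -> L <= f (x k)) ->
  exists2 H, 0 <= H & forall k, (N0 <= k)%N -> alpha k <= H * t k.
Proof.
move=> x_near x_above.
have D0 : 0 <= D by apply: le_trans (x_near N0 (leqnn _)); exact: dotp_ge0.
have r0 : 0 < D + 1 + 1 by lra.
have [B f_le] := convex_box_bound f z (D + 1 + 1) f_convex r0.
exists (Num.max 1 (B - L + eps 0%N)); first by rewrite le_max ler01.
move=> k N0k.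
rewrite t_def; apply: normalized_step_ge => //.
have x_box : forall i, `|x k ord0 i - z ord0 i| <= D + 1.
  by move=> i; have := coord_le (x_near k N0k) i; rewrite !mxE.
have := eps_subgrad_norm_le f_le x_box (s_sub k).
by have := x_above k N0k; have := eps_le_eps0 k; lra.
Qed.

(* The key consequence of the stepsize rule: for every z in C and del > 0
   the values f(x_k) drop below f z + del infinitely often.  Otherwise the
   summed basic inequality bounds the iterates and the sums of t_k, while
   the sums of alpha_k <= H t_k diverge. *)
Lemma values_frequently_below (z : vec) (del : R) (N0 : nat) : C z -> 0 < del ->
  exists k, (N0 <= k)%N /\ f (x k) <= f z + del.
Proof.
move=> Cz del0; apply: contrapT => never_below.
have above : forall k, (N0 <= k)%N -> f z + del <= f (x k).
  move=> k N0k; rewrite leNgt; apply/negP => lt_k.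
  by apply: never_below; exists k; split => //; exact: ltW.
have sums := basic_inequality_sum z N0 del Cz (ltW del0) above.
set D := N (x N0 - z) + err_const * S2.
have err_sum i : err_const * \sum_(N0 <= k < N0 + i) alpha_sq k <= err_const * S2.
  by rewrite ler_wpM2l ?err_const_ge0 ?alpha_sq_block_le.
have t_sum0 i : 0 <= \sum_(N0 <= k < N0 + i) t k.
  by apply: sumr_ge0 => k _; exact: stepsize_ge0.
have x_near : forall k, (N0 <= k)%N -> N (x k - z) <= D.
  move=> k /subnKC <-; have := sums (k - N0)%N; have := err_sum (k - N0)%N.
  by rewrite /D; have := mulr_ge0 (ltW del0) (t_sum0 (k - N0)%N); lra.
have fz_le : f z <= f z + del by lra.
have [H H0 alpha_le] := stepsize_comparable z D (f z) N0 x_near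
  (fun k N0k => le_trans fz_le (above k N0k)).
have [m [N0m big_sum]] := divergent_series_blocks alpha_div (H * D / (2 * del) + 1) N0.
move: big_sum; rewrite -(subnKC N0m); set i := (m - N0)%N.
have : \sum_(N0 <= k < N0 + i) alpha k <= H * \sum_(N0 <= k < N0 + i) t k.
  by rewrite mulr_sumr; apply: ler_sum_nat => k /andP[N0k _]; exact: alpha_le.
have : H * \sum_(N0 <= k < N0 + i) t k <= H * D / (2 * del).
  rewrite -mulrA ler_wpM2l // ler_pdivlMr; last lra.
  have := sums i; have := err_sum i; have := dotp_ge0 (x (N0 + i) - z).
  by rewrite /D; lra.
lra.
Qed.

(* First assertion: liminf f(x_k) = f^*.  Every tail infimum lies below
   f z + e for all z in C and e > 0, while every value f(x_k) is at least
   f^* because the iterates are feasible. *)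
Lemma liminf_values : limn_einf (fun k => (f (x k))%:E) = opt_val f C.
Proof.
rewrite limn_einf_lim (cvg_lim _ (@cvg_einfs_sup R _)) //.
apply/eqP; rewrite eq_le; apply/andP; split.
  apply/ereal_supP => _ [J _ <-]; apply/ereal_infP => _ [z Cz <-].
  apply/lee_addgt0Pr => e e0; rewrite -EFinD.
  have [k [Jk fk]] := values_frequently_below z e J Cz e0.
  apply: le_trans (_ : (f (x k))%:E <= _)%E; last by rewrite lee_fin.
  by apply: ereal_inf_lbound; exists k.
apply: (@le_trans _ _ (einfs (fun k => (f (x k))%:E) 0%N)).
  apply/ereal_infP => _ [k _ <-]; apply: ereal_inf_lbound.
  by exists (x k) => //; exact: iterate_in_C.
by apply: ereal_sup_ubound; exists 0%N.
Qed.

Lemma quasi_fejer_minimizer (p : vec) : minimizers f C p ->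
  forall k i, N (x (k + i)%N - p) <= N (x k - p) + err_const * \sum_(k <= j < k + i) alpha_sq j.
Proof.
move=> [Cp p_min] k i.
have p_below j : (k <= j)%N -> f p + 0 <= f (x j) by rewrite addr0 => _; exact/p_min/iterate_in_C.
by have := basic_inequality_sum p k 0 Cp (lexx 0) p_below i; rewrite mulr0 mul0r addr0.
Qed.

Hypothesis C_closed : closed C.

(* Second assertion: if a minimizer z0 exists, the iterates are bounded, a
   subsequence with values tending to f z0 clusters at a point p of C,
   p is a minimizer by lower semicontinuity of f, and quasi-Fejer
   monotonicity with respect to p forces the whole sequence to converge
   to p. *)
Lemma converges_to_minimizer (z0 : vec) : minimizers f C z0 ->
  exists2 p, minimizers f C p & x @ \oo --> p.
Proof.
move=> z0_min; have [Cz0 z0_le] := z0_min.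
set D := N (x 0%N - z0) + err_const * S2.
have x_box k i : `|x k ord0 i - z0 ord0 i| <= D + 1.
  suff x_near : N (x k - z0) <= D by have := coord_le x_near i; rewrite !mxE.
  have := quasi_fejer_minimizer z0 z0_min 0 k; rewrite add0n /D.
  by have := ler_wpM2l err_const_ge0 (alpha_sq_block_le 0 k); lra.
have below j : exists k, (j <= k)%N /\ f (x k) <= f z0 + j.+1%:R^-1.
  by apply: values_frequently_below Cz0 _; rewrite invr_gt0 ltr0n.
have [ph ph_spec] := choice below.
have [p Cp p_clust] := bounded_seq_cluster C_closed (fun j => iterate_in_C (ph j))
  (fun j => x_box (ph j)).
have fp_le : f p <= f z0.
  apply: (convex_le_of_near _ _ f_convex) => tau e tau0 e0.
  have [J _ J_small] := near_infty_natSinv_lt (PosNum e0).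
  have [j [Jj near_j]] := p_clust tau J tau0.
  exists (x (ph j)); split => //.
  have [_ fj] := ph_spec j; apply: le_trans fj _.
  by rewrite lerD2l; exact/ltW/J_small.
have p_min : minimizers f C p by split => // y Cy; exact: le_trans fp_le (z0_le y Cy).
exists p => //.
apply: (quasi_fejer_cvg err_const_ge0 (fun k => sqr_ge0 (alpha k)) alpha_sq_cvg
  (quasi_fejer_minimizer p p_min)).
move=> tau K tau0; have [j [Kj near_j]] := p_clust tau K tau0.
by exists (ph j); split => //; exact: leq_trans Kj (proj1 (ph_spec j)).
Qed.

End SubgradientInexP.

(* The main theorem. *)
Theorem mainTheorem5 (R : realType) (n : nat)
  (f : 'rV[R]_n -> R) (C : set 'rV[R]_n)
  (x s : nat -> 'rV[R]_n)
  (t eps alpha gam th lam : nat -> R)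
  (phi : nat -> 'rV[R]_n -> 'rV[R]_n -> 'rV[R]_n -> R)
  (gbar thbar lbar mu : R) :
  (* problem data *)
  convex_fun f -> C !=set0 -> closed C -> cvx_set C ->
  (* standing assumptions on the tolerance parameters *)
  0 <= gbar -> 0 <= thbar -> thbar < 1/2 -> 0 <= lbar -> lbar < 1/2 ->
  (forall k, 0 <= gam k /\ gam k < gbar) ->
  (forall k, 0 <= th k /\ th k < thbar) ->
  (forall k, 0 <= lam k /\ lam k < lbar) ->
  (forall k, rel_err_tol (gam k) (th k) (lam k) (phi k)) ->
  (* exogenous stepsize rule *)
  0 <= mu ->
  (forall k, 0 <= alpha k) -> (forall k, 0 <= eps k) ->
  (forall k, eps k.+1 <= eps k) ->
  (series alpha @ \oo --> +oo) ->
  cvg (series (fun k => alpha k ^+ 2) @ \oo) ->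
  (forall k, eps k <= mu * alpha k) ->
  (forall k, t k = alpha k / Num.max 1 (enorm (s k))) ->
  (* the Subgradient-InexP iteration, which never stops *)
  C (x 0%N) ->
  (forall k, ~ (eps_subdiff f 0 (x k)) 0) ->
  (forall k, s k != 0 /\ eps_subdiff f (eps k) (x k) (s k)) ->
  (forall k, t k > 0) ->
  (forall k, inexact_proj C (phi k) (x k) (x k - t k *: s k) (x k.+1)) ->
  limn_einf (fun k => (f (x k))%:E) = opt_val f C /\
  (minimizers f C !=set0 ->
     exists2 xs, minimizers f C xs & x @ \oo --> xs).
Proof.
move=> f_convex _ C_closed _ gbar0 thbar0 thbar_lt lbar0 lbar_lt gam_bnd th_bnd lam_bnd
  phi_tol mu0 alpha0 eps0 eps_dec alpha_div alpha_sq_cvg eps_le t_def Cx0 _ s_iter _ x_next.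
have s_sub k : eps_subdiff f (eps k) (x k) (s k) by have [] := s_iter k.
split; first exact: (liminf_values f_convex gbar0 thbar0 thbar_lt lbar0 lbar_lt gam_bnd th_bnd
  lam_bnd phi_tol mu0 alpha0 eps0 eps_dec alpha_div alpha_sq_cvg eps_le t_def Cx0 s_sub x_next).
move=> [z0 z0_min].
exact: (converges_to_minimizer f_convex gbar0 thbar0 thbar_lt lbar0 lbar_lt gam_bnd th_bnd
  lam_bnd phi_tol mu0 alpha0 eps0 eps_dec alpha_div alpha_sq_cvg eps_le t_def Cx0 s_sub x_next
  C_closed z0 z0_min).
Qed.
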